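(* Let $\Delta$ be a geodetic graph and $s$ a positive integer. If every isometrically embedded circuit in $\Delta$ has length at most $2s+1$, then $\Delta$ is $s$-broomlike.
   Context: Graphs are simple and undirected. A graph is geodetic if between any two vertices there is a unique shortest path (geodesic); $d$ denotes the path metric. A path $u_0,\dots,u_n$ is an embedded circuit of length $n$ if $u_0,\dots,u_{n-1}$ are distinct and $u_0=u_n$; it is isometrically embedded if $d(u_i,u_j)=\min\{j-i,n+i-j\}$ for all $0\le i<j<n$ (a path $u,v,u$ with $u,v$ adjacent counts as one of length two). A geodetic graph $\Delta$ is $s$-broomlike if whenever $a_0,\dots,a_{n-1},a_n,b$ is a path of distinct vertices such that $a_0,\dots,a_n$ is a geodesic but $a_0,\dots,a_n,b$ is not, then the geodesic from $a_0$ to $b$ is $a_0,\dots,a_{n-p},b_{n-p+1},\dots,b_n=b$ for some $p\le s$ with $b_{n-p+1}\neq a_{n-p+1}$. *)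

From Stdlib Require Import List Arith Lia.
Import ListNotations.

Definition simple_graph {V : Type} (adj : V -> V -> Prop) : Prop :=
  (forall x y, adj x y -> adj y x) /\ (forall x, ~ adj x x).

(* A path (walk) u_0, ..., u_n given as the list [u_0; ...; u_n]:
   consecutive vertices are adjacent.  Its length is n = length - 1. *)
Fixpoint walk {V : Type} (adj : V -> V -> Prop) (p : list V) : Prop :=
  match p with
  | x :: ((y :: _) as q) => adj x y /\ walk adj q
  | _ => True
  end.

Definition walk_ft {V : Type} (adj : V -> V -> Prop) (u v : V) (p : list V) : Prop :=
  walk adj p /\ nth_error p 0 = Some u /\ nth_error p (length p - 1) = Some v.

Definition dist {V : Type} (adj : V -> V -> Prop) (u v : V) (k : nat) : Prop :=
  (exists p, walk_ft adj u v p /\ length p = S k) /\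
  (forall p, walk_ft adj u v p -> S k <= length p).

Definition geodesic_ft {V : Type} (adj : V -> V -> Prop) (u v : V) (p : list V) : Prop :=
  walk_ft adj u v p /\ (forall q, walk_ft adj u v q -> length p <= length q).

Definition is_geodesic {V : Type} (adj : V -> V -> Prop) (p : list V) : Prop :=
  exists u v, geodesic_ft adj u v p.

Definition geodetic {V : Type} (adj : V -> V -> Prop) : Prop :=
  forall u v, exists! p, geodesic_ft adj u v p.

Definition iso_circuit {V : Type} (adj : V -> V -> Prop) (c : list V) (n : nat) : Prop :=
  length c = S n /\ walk adj c /\
  nth_error c n = nth_error c 0 /\
  NoDup (firstn n c) /\
  (forall i j x y, i < j -> j < n ->
     nth_error c i = Some x -> nth_error c j = Some y ->
     dist adj x y (Nat.min (j - i) (n + i - j))).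

Definition broomlike {V : Type} (adj : V -> V -> Prop) (s : nat) : Prop :=
  forall (a : list V) (b a0 : V) (n : nat),
    length a = S n ->
    nth_error a 0 = Some a0 ->
    NoDup (a ++ [b]) ->
    walk adj (a ++ [b]) ->
    is_geodesic adj a ->
    ~ is_geodesic adj (a ++ [b]) ->
    forall g, geodesic_ft adj a0 b g ->
    exists p, 1 <= p /\ p <= s /\ p <= n /\
      length g = S n /\
      (forall i, i <= n - p -> nth_error g i = nth_error a i) /\
      nth_error g (n - p + 1) <> nth_error a (n - p + 1).

From Stdlib Require Import List Arith Lia Classical Wf_nat.
Import ListNotations.

(* Let [a_0 ... a_n, b] be as in the definition of broomlike and [g] the
   geodesic from [a_0] to [b].  As [a_0 ... a_n] is the unique geodesic to
   [a_n] and [b] is not on it, [d(a_0, b) = n]; let [a_k = g_k] be the last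
   common vertex and [p = n - k].  The closed walk
   [a_k, ..., a_n, g_n, ..., g_(k+1)] has length [2p + 1], and both its arcs of
   length [p] starting at [a_k] are geodesics.  In a geodetic graph this
   property passes from a vertex of such an odd circuit to the vertex [p] steps
   further on (a shortcut would create two distinct midpoints of one geodesic);
   as [p] generates the integers modulo [2p + 1], it holds at every vertex, so
   the circuit is isometric and [2p + 1 <= 2s + 1]. *)

Lemma least_nat (P : nat -> Prop) :
  (exists n, P n) -> exists m, P m /\ forall m', P m' -> m <= m'.
Proof.
  intro HP.
  destruct (dec_inh_nat_subset_has_unique_least_element P (fun n => classic (P n)) HP)
    as [m [[Hm Hmin] _]].
  eauto.
Qed.

Lemma first_failure (P : nat -> Prop) n :
  P 0 -> ~ P n -> exists k, k < n /\ (forall i, i <= k -> P i) /\ ~ P (S k).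
Proof.
  intros H0 Hn.
  destruct (least_nat (fun m => ~ P m) (ex_intro _ n Hn)) as [[|k] [Hk Hmin]];
    [contradiction|].
  exists k. split; [|split; [|exact Hk]].
  - specialize (Hmin n Hn). lia.
  - intros i Hi. apply NNPP. intro Hc. specialize (Hmin i Hc). lia.
Qed.

Lemma mod_neq_window a b N : a < b < a + N -> a mod N <> b mod N.
Proof.
  intros Hab E.
  pose proof (Nat.div_mod_eq a N). pose proof (Nat.div_mod_eq b N).
  assert (a / N < b / N) by nia. nia.
Qed.

Lemma nth_error_map_seq {A : Type} (f : nat -> A) L i :
  i < L -> nth_error (map f (seq 0 L)) i = Some (f i).
Proof.
  intro Hi. rewrite nth_error_map, nth_error_seq.
  destruct (Nat.ltb_spec i L); [reflexivity | lia].
Qed.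

Lemma nth_map_seq {A : Type} (f : nat -> A) (d : A) L i :
  i < L -> nth i (map f (seq 0 L)) d = f i.
Proof.
  intro Hi. apply nth_error_nth. now apply nth_error_map_seq.
Qed.

Lemma NoDup_snoc_nth_neq {A : Type} (l : list A) (b d : A) i :
  NoDup (l ++ [b]) -> i < length l -> nth i l d <> b.
Proof.
  intros Hnd Hi E. apply NoDup_remove_2 with (l' := []) in Hnd.
  rewrite app_nil_r in Hnd. apply Hnd. rewrite <- E. now apply nth_In.
Qed.

Section Walks.
Context {V : Type} (adj : V -> V -> Prop).

(* Walks of length [L] as functions [nat -> V]; index arithmetic is much
   lighter on functions than on lists. *)
Definition chain (u v : V) (L : nat) (f : nat -> V) : Prop :=
  f 0 = u /\ f L = v /\ forall i, i < L -> adj (f i) (f (S i)).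

Lemma walk_nth (d : V) l :
  walk adj l <-> forall i, S i < length l -> adj (nth i l d) (nth (S i) l d).
Proof.
  induction l as [|x [|y l] IH]; simpl.
  - split; [intros _ i Hi; lia | auto].
  - split; [intros _ i Hi; lia | auto].
  - split.
    + intros [Hxy Hw] [|i] Hi; [exact Hxy|].
      apply IH; [exact Hw | simpl in *; lia].
    + intros H. split; [apply (H 0); simpl; lia|].
      apply IH. intros i Hi. apply (H (S i)). simpl in *; lia.
Qed.

Lemma chain_walk_ft u v L f :
  chain u v L f -> walk_ft adj u v (map f (seq 0 (S L))).
Proof.
  intros [H0 [HL Hadj]]. split; [|split].
  - apply (walk_nth u). rewrite length_map, length_seq. intros i Hi.
    rewrite !nth_map_seq by lia. apply Hadj; lia.
  - rewrite nth_error_map_seq by lia. now rewrite H0.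
  - rewrite length_map, length_seq, nth_error_map_seq by lia.
    replace (S L - 1) with L by lia. now rewrite HL.
Qed.

Lemma walk_ft_chain u v l :
  walk_ft adj u v l -> exists L, length l = S L /\ chain u v L (fun i => nth i l u).
Proof.
  intros [Hw [H0 HL]]. destruct l as [|x l]; [discriminate|].
  exists (length l). split; [reflexivity|]. split; [|split].
  - simpl in H0. injection H0. auto.
  - rewrite nth_error_nth' with (d := u) in HL by (simpl; lia).
    replace (length (x :: l) - 1) with (length l) in HL by (simpl; lia).
    injection HL. auto.
  - intros i Hi. apply (walk_nth u (x :: l)); [exact Hw | simpl; lia].
Qed.

Lemma walk_ft_snoc a b a0 n :
  walk adj (a ++ [b]) -> length a = S n -> nth_error a 0 = Some a0 ->
  walk_ft adj a0 b (a ++ [b]) /\ adj (nth n a a0) b.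
Proof.
  intros Hw Hlen Ha0. split; [split; [exact Hw|split]|].
  - now rewrite nth_error_app1 by lia.
  - rewrite length_app, nth_error_app2, Hlen by (simpl; lia).
    now replace (S n + length [b] - 1 - S n) with 0 by (simpl; lia).
  - apply (walk_nth a0 (a ++ [b])) with (i := n) in Hw; [|rewrite length_app; simpl; lia].
    rewrite app_nth1, app_nth2, Hlen, Nat.sub_diag in Hw by lia. exact Hw.
Qed.

Lemma chain_refl u : chain u u 0 (fun _ => u).
Proof. repeat split. intros; lia. Qed.

Lemma chain_edge u v : adj u v -> chain u v 1 (fun t => if t =? 0 then u else v).
Proof. intro H. repeat split. intros [|i] Hi; [exact H | lia]. Qed.

Lemma chain_app u w v a b f g :
  chain u w a f -> chain w v b g ->
  chain u v (a + b) (fun t => if t <=? a then f t else g (t - a)).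
Proof.
  intros [F0 [Fa Fadj]] [G0 [Gb Gadj]]. split; [|split].
  - exact F0.
  - destruct (Nat.leb_spec (a + b) a).
    + replace b with 0 in * by lia. rewrite Nat.add_0_r. congruence.
    + now replace (a + b - a) with b by lia.
  - intros i Hi. destruct (Nat.leb_spec i a), (Nat.leb_spec (S i) a).
    + apply Fadj; lia.
    + replace i with a by lia. replace (S a - a) with 1 by lia.
      rewrite Fa, <- G0. apply Gadj. lia.
    + lia.
    + replace (S i - a) with (S (i - a)) by lia. apply Gadj; lia.
Qed.

Lemma chain_sub u v L f i j :
  chain u v L f -> i <= j <= L -> chain (f i) (f j) (j - i) (fun t => f (i + t)).
Proof.
  intros [_ [_ Fadj]] Hij. split; [|split].
  - f_equal; lia.
  - f_equal; lia.
  - intros t Ht. replace (i + S t) with (S (i + t)) by lia. apply Fadj. lia.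
Qed.

Lemma dist_chain u v k : dist adj u v k -> exists f, chain u v k f.
Proof.
  intros [[l [Hl Hlen]] _]. destruct (walk_ft_chain u v l Hl) as [L [HL Hc]].
  exists (fun i => nth i l u). now replace k with L by lia.
Qed.

Lemma dist_le_chain u v k L f : dist adj u v k -> chain u v L f -> k <= L.
Proof.
  intros [_ Hmin] Hc. specialize (Hmin _ (chain_walk_ft u v L f Hc)).
  rewrite length_map, length_seq in Hmin. lia.
Qed.

Lemma dist_intro u v k f :
  chain u v k f -> (forall L g, chain u v L g -> k <= L) -> dist adj u v k.
Proof.
  intros Hc Hmin. split.
  - exists (map f (seq 0 (S k))). split; [now apply chain_walk_ft|].
    now rewrite length_map, length_seq.
  - intros l Hl. destruct (walk_ft_chain u v l Hl) as [L [HL Hg]].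
    specialize (Hmin _ _ Hg). lia.
Qed.

Lemma chain_dist u v L f : chain u v L f -> exists k, dist adj u v k /\ k <= L.
Proof.
  intro Hc.
  destruct (least_nat (fun m => exists g, chain u v m g) (ex_intro _ L (ex_intro _ f Hc)))
    as [k [[g Hg] Hmin]].
  exists k. split.
  - apply (dist_intro u v k g Hg). intros L' g' Hg'. apply Hmin. eauto.
  - apply Hmin. eauto.
Qed.

Lemma dist_unique u v k k' : dist adj u v k -> dist adj u v k' -> k = k'.
Proof.
  intros H H'. destruct (dist_chain u v k H) as [f Hf].
  destruct (dist_chain u v k' H') as [g Hg].
  pose proof (dist_le_chain u v k k' g H Hg).
  pose proof (dist_le_chain u v k' k f H' Hf). lia.
Qed.

Lemma dist_refl u : dist adj u u 0.
Proof. apply (dist_intro u u 0 _ (chain_refl u)). lia. Qed.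

Lemma dist_triangle u w v a b c :
  dist adj u w a -> dist adj w v b -> dist adj u v c -> c <= a + b.
Proof.
  intros Ha Hb Hc. destruct (dist_chain u w a Ha) as [f Hf].
  destruct (dist_chain w v b Hb) as [g Hg].
  exact (dist_le_chain u v c _ _ Hc (chain_app u w v a b f g Hf Hg)).
Qed.

Lemma dist_chain_sub u v n f i j :
  chain u v n f -> dist adj u v n -> i <= j <= n -> dist adj (f i) (f j) (j - i).
Proof.
  intros Hf Hd Hij. apply (dist_intro _ _ _ _ (chain_sub u v n f i j Hf Hij)).
  intros L g Hg.
  pose proof (chain_app _ _ _ _ _ _ _ (chain_sub u v n f 0 i Hf ltac:(lia)) Hg) as H1.
  pose proof (chain_app _ _ _ _ _ _ _ H1 (chain_sub u v n f j n Hf ltac:(lia))) as H2.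
  destruct Hf as [F0 [Fn _]]. rewrite F0, Fn in H2.
  pose proof (dist_le_chain _ _ _ _ _ Hd H2). lia.
Qed.

Lemma dist_chain_prefix u v n f i :
  chain u v n f -> dist adj u v n -> i <= n -> dist adj u (f i) i.
Proof.
  intros Hf Hd Hi. pose proof (dist_chain_sub u v n f 0 i Hf Hd ltac:(lia)) as H.
  destruct Hf as [F0 _]. now rewrite F0, Nat.sub_0_r in H.
Qed.

Lemma geodesic_ft_dist u v l :
  geodesic_ft adj u v l ->
  exists L, length l = S L /\ chain u v L (fun i => nth i l u) /\ dist adj u v L.
Proof.
  intros [Hw Hmin]. destruct (walk_ft_chain u v l Hw) as [L [HL Hc]].
  exists L. split; [exact HL|]. split; [exact Hc|]. split.
  - exists l. auto.
  - intros q Hq. rewrite <- HL. auto.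
Qed.

Lemma geodesic_ft_shorter u v g l :
  geodesic_ft adj u v g -> walk_ft adj u v l -> ~ is_geodesic adj l -> length g < length l.
Proof.
  intros [Hg Hmin] Hl Hnot. specialize (Hmin l Hl) as Hle.
  destruct (Nat.eq_dec (length g) (length l)) as [E|E]; [|lia].
  exfalso. apply Hnot. exists u, v. split; [exact Hl|].
  intros q Hq. rewrite <- E. auto.
Qed.

Lemma dist_edge u v : (forall x, ~ adj x x) -> adj u v -> dist adj u v 1.
Proof.
  intros adj_irrefl H. apply (dist_intro u v 1 _ (chain_edge u v H)).
  intros [|L] g [G0 [GL _]]; [|lia]. exfalso. apply (adj_irrefl u). congruence.
Qed.

Section Symmetric.
Hypothesis adj_sym : forall x y, adj x y -> adj y x.

Lemma chain_rev u v L f : chain u v L f -> chain v u L (fun t => f (L - t)).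
Proof.
  intros [F0 [FL Fadj]]. split; [|split].
  - now rewrite Nat.sub_0_r.
  - now rewrite Nat.sub_diag.
  - intros i Hi. apply adj_sym. replace (L - i) with (S (L - S i)) by lia.
    apply Fadj. lia.
Qed.

Lemma dist_sym u v k : dist adj u v k -> dist adj v u k.
Proof.
  intro Hd. destruct (dist_chain u v k Hd) as [f Hf].
  apply (dist_intro v u k _ (chain_rev u v k f Hf)).
  intros L g Hg. exact (dist_le_chain u v k L _ Hd (chain_rev v u L g Hg)).
Qed.

End Symmetric.
End Walks.

Section Geodetic.
Context {V : Type} (adj : V -> V -> Prop).
Hypothesis adj_sym : forall x y, adj x y -> adj y x.
Hypothesis adj_irrefl : forall x, ~ adj x x.
Hypothesis geo : geodetic adj.

Lemma geodesic_chain_unique u v k f g :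
  dist adj u v k -> chain adj u v k f -> chain adj u v k g ->
  forall i, i <= k -> f i = g i.
Proof.
  intros Hd Hf Hg i Hi.
  assert (Geo : forall h, chain adj u v k h -> geodesic_ft adj u v (map h (seq 0 (S k)))).
  { intros h Hh. split; [now apply chain_walk_ft|].
    intros q Hq. rewrite length_map, length_seq. now apply Hd. }
  destruct (geo u v) as [l [_ Hl]].
  pose proof (f_equal (fun l => nth_error l i)
                (eq_trans (eq_sym (Hl _ (Geo f Hf))) (Hl _ (Geo g Hg)))) as E.
  cbv beta in E. rewrite !nth_error_map_seq in E by lia. congruence.
Qed.

Lemma midpoint_unique u v w w' k i :
  dist adj u v k -> i <= k ->
  dist adj u w i -> dist adj w v (k - i) ->
  dist adj u w' i -> dist adj w' v (k - i) -> w = w'.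
Proof.
  intros Hd Hik H1 H2 H1' H2'.
  destruct (dist_chain adj _ _ _ H1) as [f1 C1].
  destruct (dist_chain adj _ _ _ H2) as [f2 C2].
  destruct (dist_chain adj _ _ _ H1') as [g1 D1].
  destruct (dist_chain adj _ _ _ H2') as [g2 D2].
  pose proof (chain_app adj _ _ _ _ _ _ _ C1 C2) as CC.
  pose proof (chain_app adj _ _ _ _ _ _ _ D1 D2) as DD.
  replace (i + (k - i)) with k in CC, DD by lia.
  pose proof (geodesic_chain_unique u v k _ _ Hd CC DD i Hik) as E.
  simpl in E. rewrite Nat.leb_refl in E.
  destruct C1 as [_ [C1 _]], D1 as [_ [D1 _]]. congruence.
Qed.

(* The geodesic to [v] is unique, so a neighbour [b] of [v] off that geodesic
   cannot be one step closer to [u] than [v] is. *)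
Lemma dist_past_geodesic_end u v b n m f :
  chain adj u v n f -> dist adj u v n -> adj v b -> (forall i, i <= n -> f i <> b) ->
  dist adj u b m -> m < S n -> m = n.
Proof.
  intros Hf Hd Hvb Hoff Hm Hlt.
  pose proof (dist_edge adj b v adj_irrefl (adj_sym _ _ Hvb)) as Hbv.
  pose proof (dist_triangle adj _ _ _ _ _ _ Hm Hbv Hd).
  destruct (Nat.eq_dec m n) as [|Hne]; [assumption|].
  exfalso. apply (Hoff (n - 1)); [lia|].
  destruct Hf as [F0 [Fn Fadj]].
  apply (midpoint_unique u v _ _ n (n - 1) Hd); [lia| | | |].
  - apply (dist_chain_prefix adj u v n); [split; auto | exact Hd | lia].
  - replace (n - (n - 1)) with 1 by lia. rewrite <- Fn.
    replace (f n) with (f (S (n - 1))) by (f_equal; lia).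
    apply dist_edge; [exact adj_irrefl|]. apply Fadj. lia.
  - now replace (n - 1) with m by lia.
  - now replace (n - (n - 1)) with 1 by lia.
Qed.

Section OddCircuit.
Variables (c : nat -> V) (p : nat).
Local Notation N := (2 * p + 1).
Hypothesis c_adj : forall t, adj (c t) (c (S t)).
Hypothesis c_periodic : forall t, c (t + N) = c t.
Hypothesis c_window_inj : forall a b, a < b < a + N -> c a <> c b.

Definition arcs_geodesic (r : nat) : Prop :=
  forall i j, i <= j <= p ->
    dist adj (c (r + i)) (c (r + j)) (j - i) /\
    dist adj (c (r + N - i)) (c (r + N - j)) (j - i).

Lemma c_periodic_mul t q : c (t + q * N) = c t.
Proof.
  induction q as [|q IH]; [now rewrite Nat.add_0_r|].
  rewrite <- IH, <- (c_periodic (t + q * N)). f_equal. lia.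
Qed.

Lemma arcs_geodesic_period r q : arcs_geodesic (r + q * N) -> arcs_geodesic r.
Proof.
  intros H i j Hij. destruct (H i j Hij) as [Hfw Hbw].
  assert (E : forall t, t <= N -> c (r + q * N + t) = c (r + t)).
  { intros t Ht. rewrite <- (c_periodic_mul (r + t) q). f_equal. lia. }
  assert (E' : forall t, t <= p -> c (r + q * N + N - t) = c (r + N - t)).
  { intros t Ht. rewrite <- (c_periodic_mul (r + N - t) q). f_equal. lia. }
  rewrite !E in Hfw by lia. rewrite !E' in Hbw by lia. now split.
Qed.

(* If the new arc were shorter, [c (r + N - q)] and [c (r + q)] would be two
   distinct midpoints of the geodesic from [c (r + p)] to [c r]. *)
Lemma arcs_geodesic_antipode_head r j :
  arcs_geodesic r -> 1 <= j <= p -> dist adj (c (r + p)) (c (r + p + j)) j.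
Proof.
  intros H Hj. set (q := p + 1 - j).
  replace (c (r + p + j)) with (c (r + N - q)) by (f_equal; unfold q; lia).
  destruct (H 0 p ltac:(lia)) as [Hrp _].
  destruct (H 0 q ltac:(lia)) as [Hrq Hrq'].
  destruct (H q p ltac:(lia)) as [Hqp Hq'p].
  rewrite Nat.add_0_r, Nat.sub_0_r in Hrp, Hrq.
  rewrite !Nat.sub_0_r, c_periodic in Hrq'.
  replace (c (r + N - p)) with (c (S (r + p))) in Hq'p by (f_equal; lia).
  destruct (dist_chain adj _ _ _ (dist_sym adj adj_sym _ _ _ Hq'p)) as [f Hf].
  destruct (chain_dist adj _ _ _ _ (chain_app adj _ _ _ _ _ _ _ (chain_edge adj _ _ (c_adj (r + p))) Hf))
    as [e [He Hle]].
  pose proof (dist_triangle adj _ _ _ _ _ _ Hrq' (dist_sym adj adj_sym _ _ _ He) Hrp).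
  assert (e = j) as <-; [|exact He].
  destruct (Nat.eq_dec e (p - q)) as [E|]; [|unfold q in *; lia].
  exfalso. apply (c_window_inj (r + q) (r + N - q)); [unfold q in *; lia|].
  apply (midpoint_unique (c (r + p)) (c r) _ _ p (p - q) (dist_sym adj adj_sym _ _ _ Hrp));
    [lia| | | |].
  - now apply dist_sym.
  - replace (p - (p - q)) with q by lia. now apply dist_sym.
  - now rewrite <- E.
  - replace (p - (p - q)) with q by lia. now apply dist_sym.
Qed.

Lemma arcs_geodesic_rotate r : arcs_geodesic r -> arcs_geodesic (r + p).
Proof.
  intros H i j Hij. split.
  - destruct (Nat.eq_dec i 0) as [->|Hi].
    + destruct (Nat.eq_dec j 0) as [->|Hj]; [apply dist_refl|].
      rewrite Nat.add_0_r, Nat.sub_0_r. apply arcs_geodesic_antipode_head; [exact H | lia].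
    + replace (c (r + p + i)) with (c (r + N - (p + 1 - i))) by (f_equal; lia).
      replace (c (r + p + j)) with (c (r + N - (p + 1 - j))) by (f_equal; lia).
      replace (j - i) with (p + 1 - i - (p + 1 - j)) by lia.
      apply (dist_sym adj adj_sym). apply (H (p + 1 - j) (p + 1 - i)). lia.
  - assert (E : forall t, t <= p -> c (r + p + N - t) = c (r + (p - t))).
    { intros t Ht. rewrite <- (c_periodic (r + (p - t))). f_equal. lia. }
    rewrite !E by lia.
    replace (j - i) with (p - i - (p - j)) by lia.
    apply (dist_sym adj adj_sym). apply (H (p - j) (p - i)). lia.
Qed.

(* [p] is invertible modulo [2p+1]: [(N - r) * 2p = r + (2p - r) * N]. *)
Lemma arcs_geodesic_everywhere :
  arcs_geodesic 0 -> forall r, r < N -> arcs_geodesic r.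
Proof.
  intros H0.
  assert (Hm : forall m, arcs_geodesic (m * (2 * p))).
  { induction m as [|m IH]; [exact H0|].
    replace (S m * (2 * p)) with (m * (2 * p) + p + p) by lia.
    now apply arcs_geodesic_rotate, arcs_geodesic_rotate. }
  intros r Hr. apply (arcs_geodesic_period r (2 * p - r)).
  replace (r + (2 * p - r) * N) with ((N - r) * (2 * p)) by nia. apply Hm.
Qed.

Lemma arcs_geodesic_iso_circuit :
  arcs_geodesic 0 -> iso_circuit adj (map c (seq 0 (S N))) N.
Proof.
  intro H0. pose proof (arcs_geodesic_everywhere H0) as Hall.
  split; [|split; [|split; [|split]]].
  - now rewrite length_map, length_seq.
  - apply (walk_nth adj (c 0)). rewrite length_map, length_seq. intros i Hi.
    rewrite !nth_map_seq by lia. apply c_adj.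
  - rewrite !nth_error_map_seq by lia. f_equal. exact (c_periodic 0).
  - apply NoDup_nth_error. intros i j Hi Hij.
    rewrite length_firstn, length_map, length_seq in Hi.
    rewrite !nth_error_firstn in Hij.
    destruct (Nat.ltb_spec i N); [|lia].
    destruct (Nat.ltb_spec j N).
    + rewrite !nth_error_map_seq in Hij by lia. injection Hij as Hij.
      destruct (Nat.lt_trichotomy i j) as [Hl|[Hl|Hl]]; [| exact Hl |].
      * exfalso. apply (c_window_inj i j); [lia | exact Hij].
      * exfalso. apply (c_window_inj j i); [lia | now symmetry].
    + rewrite nth_error_map_seq in Hij by lia. discriminate.
  - intros i j x y Hij HjN Hx Hy.
    rewrite nth_error_map_seq in Hx, Hy by lia. injection Hx as <-. injection Hy as <-.
    destruct (Nat.le_gt_cases (j - i) p).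
    + destruct (Hall i ltac:(lia) 0 (j - i) ltac:(lia)) as [Hfw _].
      rewrite Nat.add_0_r, Nat.sub_0_r in Hfw. replace (i + (j - i)) with j in Hfw by lia.
      now replace (Nat.min (j - i) (N + i - j)) with (j - i) by lia.
    + destruct (Hall i ltac:(lia) 0 (N + i - j) ltac:(lia)) as [_ Hbw].
      rewrite !Nat.sub_0_r, c_periodic in Hbw.
      replace (i + N - (N + i - j)) with j in Hbw by lia.
      now replace (Nat.min (j - i) (N + i - j)) with (N + i - j) by lia.
Qed.

End OddCircuit.

Section Splice.
Variables (A G : nat -> V) (a0 x y : V) (n k : nat).
Hypothesis A_chain : chain adj a0 x n A.
Hypothesis A_dist : dist adj a0 x n.
Hypothesis G_chain : chain adj a0 y n G.
Hypothesis G_dist : dist adj a0 y n.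
Hypothesis ends_adj : adj x y.
Hypothesis k_lt_n : k < n.
Hypothesis agree : forall i, i <= k -> G i = A i.
Hypothesis diverge : G (S k) <> A (S k).

Local Notation p := (n - k).
Local Notation N := (2 * (n - k) + 1).

(* The closed walk [A k, ..., A n = x, y = G n, ..., G (S k)] of length [N]. *)
Definition splice (r : nat) : V :=
  if r <=? n - k then A (k + r) else G (k + (2 * (n - k) + 1 - r)).

Definition splice_loop (t : nat) : V := splice (t mod (2 * (n - k) + 1)).

Lemma splice_level r : r < N -> dist adj a0 (splice r) (k + Nat.min r (N - r)).
Proof.
  intro Hr. unfold splice. destruct (Nat.leb_spec r p).
  - replace (Nat.min r (N - r)) with r by lia.
    apply (dist_chain_prefix adj a0 x n); auto; lia.
  - replace (Nat.min r (N - r)) with (N - r) by lia.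
    apply (dist_chain_prefix adj a0 y n); auto; lia.
Qed.

Lemma splice_cross_neq r1 r2 : r1 <= p -> p < r2 < N -> splice r1 <> splice r2.
Proof.
  intros H1 H2 E.
  pose proof (splice_level r1 ltac:(lia)) as L1. pose proof (splice_level r2 ltac:(lia)) as L2.
  rewrite E in L1. pose proof (dist_unique adj _ _ _ _ L1 L2).
  unfold splice in E. destruct (Nat.leb_spec r1 p), (Nat.leb_spec r2 p); try lia.
  replace (k + (N - r2)) with (k + r1) in E by lia.
  apply diverge. apply (midpoint_unique a0 (A (k + r1)) _ _ (k + r1) (S k)).
  - apply (dist_chain_prefix adj a0 x n); auto; lia.
  - lia.
  - apply (dist_chain_prefix adj a0 y n); auto; lia.
  - rewrite E. apply (dist_chain_sub adj a0 y n); auto; lia.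
  - apply (dist_chain_prefix adj a0 x n); auto; lia.
  - apply (dist_chain_sub adj a0 x n); auto; lia.
Qed.

Lemma splice_inj r1 r2 : r1 < N -> r2 < N -> splice r1 = splice r2 -> r1 = r2.
Proof.
  intros H1 H2 E.
  pose proof (splice_level r1 H1) as L1. pose proof (splice_level r2 H2) as L2.
  rewrite E in L1. pose proof (dist_unique adj _ _ _ _ L1 L2).
  destruct (Nat.le_gt_cases r1 p), (Nat.le_gt_cases r2 p); try lia.
  - exfalso. exact (splice_cross_neq r1 r2 ltac:(lia) ltac:(lia) E).
  - exfalso. exact (splice_cross_neq r2 r1 ltac:(lia) ltac:(lia) (eq_sym E)).
Qed.

Lemma splice_next r : r < N -> adj (splice r) (splice (S r mod N)).
Proof.
  intro Hr. destruct A_chain as [A0 [An A_adj]], G_chain as [G0 [Gn G_adj]].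
  unfold splice. destruct (Nat.eq_dec (S r) N) as [E|E].
  - rewrite E, Nat.Div0.mod_same, Nat.add_0_r, <- (agree k) by lia.
    destruct (Nat.leb_spec r p); [lia|].
    replace (k + (N - r)) with (S k) by lia. apply adj_sym, G_adj. lia.
  - rewrite Nat.mod_small by lia.
    destruct (Nat.leb_spec r p), (Nat.leb_spec (S r) p).
    + replace (k + S r) with (S (k + r)) by lia. apply A_adj. lia.
    + replace (k + r) with n by lia. replace (k + (N - S r)) with n by lia.
      now rewrite An, Gn.
    + lia.
    + replace (k + (N - r)) with (S (k + (N - S r))) by lia. apply adj_sym, G_adj. lia.
Qed.

Lemma splice_loop_adj t : adj (splice_loop t) (splice_loop (S t)).
Proof.
  unfold splice_loop. replace (S t) with (t + 1) by lia.
  rewrite <- Nat.Div0.add_mod_idemp_l. replace (t mod N + 1) with (S (t mod N)) by lia.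
  apply splice_next, Nat.mod_upper_bound. lia.
Qed.

Lemma splice_loop_periodic t : splice_loop (t + N) = splice_loop t.
Proof.
  unfold splice_loop. f_equal. rewrite <- (Nat.Div0.mod_add t 1). f_equal. lia.
Qed.

Lemma splice_loop_window_inj a b : a < b < a + N -> splice_loop a <> splice_loop b.
Proof.
  intros Hab E. apply (mod_neq_window a b N Hab).
  apply splice_inj; [apply Nat.mod_upper_bound; lia | apply Nat.mod_upper_bound; lia | exact E].
Qed.

Lemma splice_loop_arcs_geodesic : arcs_geodesic splice_loop p 0.
Proof.
  assert (Fw : forall i, i <= p -> splice_loop (0 + i) = A (k + i)).
  { intros i Hi. unfold splice_loop, splice. rewrite Nat.mod_small by lia.
    destruct (Nat.leb_spec (0 + i) p); [reflexivity | lia]. }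
  assert (Bw : forall i, i <= p -> splice_loop (0 + N - i) = G (k + i)).
  { intros i Hi. unfold splice_loop, splice. destruct (Nat.eq_dec i 0) as [->|].
    - replace ((0 + N - 0) mod N) with 0 by (apply (Nat.mod_unique _ _ 1); lia).
      rewrite !Nat.add_0_r. symmetry. apply agree. lia.
    - rewrite Nat.mod_small by lia.
      destruct (Nat.leb_spec (0 + N - i) p); [lia|]. f_equal. lia. }
  intros i j Hij. rewrite !Fw, !Bw by lia.
  replace (j - i) with (k + j - (k + i)) by lia. split.
  - apply (dist_chain_sub adj a0 x n); auto; lia.
  - apply (dist_chain_sub adj a0 y n); auto; lia.
Qed.

Lemma splice_iso_circuit : iso_circuit adj (map splice_loop (seq 0 (S N))) N.
Proof.
  apply arcs_geodesic_iso_circuit.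
  - exact splice_loop_adj.
  - exact splice_loop_periodic.
  - exact splice_loop_window_inj.
  - exact splice_loop_arcs_geodesic.
Qed.

End Splice.
End Geodetic.

Theorem lemma5 (V : Type) (adj : V -> V -> Prop) (s : nat) :
  simple_graph adj -> geodetic adj -> 1 <= s ->
  (forall (c : list V) (n : nat), iso_circuit adj c n -> n <= 2 * s + 1) ->
  broomlike adj s.
Proof.
  intros [adj_sym adj_irrefl] geo _ short a b a0 n Hlen Ha0 Hnd Hwalk [u [v Ha]] Hnot g Hg.
  assert (u = a0) as -> by (destruct Ha as [[_ [Hu _]] _]; congruence).
  destruct (geodesic_ft_dist adj a0 v a Ha) as [L [HL [A_chain A_dist]]].
  rewrite Hlen in HL. injection HL as <-.
  destruct (geodesic_ft_dist adj a0 b g Hg) as [m [Hm [G_chain G_dist]]].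
  destruct (walk_ft_snoc adj a b a0 n Hwalk Hlen Ha0) as [Hwft Hvb].
  replace (nth n a a0) with v in Hvb by (destruct A_chain as [_ [An _]]; auto).
  assert (Hoff : forall i, i <= n -> nth i a a0 <> b)
    by (intros i Hi; apply NoDup_snoc_nth_neq; [exact Hnd | lia]).
  pose proof (geodesic_ft_shorter adj _ _ _ _ Hg Hwft Hnot) as Hshorter.
  rewrite length_app, Hlen in Hshorter. simpl in Hshorter.
  replace m with n in * by (symmetry; apply (dist_past_geodesic_end adj adj_sym adj_irrefl geo
                              a0 v b n m _ A_chain A_dist Hvb Hoff G_dist); lia).
  destruct (first_failure (fun i => nth i g a0 = nth i a a0) n) as [k [Hk [Hagree Hdiv]]].
  { destruct A_chain as [-> _], G_chain as [-> _]. reflexivity. }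
  { intro E. apply (Hoff n (le_n n)).
    destruct A_chain as [_ [An _]], G_chain as [_ [Gn _]]. congruence. }
  pose proof (short _ _ (splice_iso_circuit adj adj_sym geo _ _ _ _ _ _ _
                           A_chain A_dist G_chain G_dist Hvb Hk Hagree Hdiv)).
  exists (n - k). do 4 (split; [lia|]). split.
  - intros i Hi. rewrite !nth_error_nth' with (d := a0) by lia. f_equal. apply Hagree. lia.
  - replace (n - (n - k) + 1) with (S k) by lia.
    rewrite !nth_error_nth' with (d := a0) by lia. intro E. injection E. exact Hdiv.
Qed.
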